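(* Let $\mathbf{V}$ be a variety of interior algebras and $B\in\mathbf{V}$. Then $B^*$ is projective in $\mathbf{V}^*$ if and only if $B^*$ is projective in $\mathbf{V}$.
   Context: An interior algebra is a Boolean algebra with an operator $g$ satisfying $g(1)=1$, $g(xy)=g(x)g(y)$, $g(x)\le x$, $gg(x)=g(x)$; $a$ is open if $g(a)=a$. $B^*$ is the subalgebra of $B$ generated by its open elements; an algebra equal to its $^*$-subalgebra is a $^*$-algebra. $\mathbf{V}^*$ is the variety generated by the $^*$-algebras in $\mathbf{V}$. *)

Set Implicit Arguments.

Record IA : Type := MkIA {
  car :> Type;
  join : car -> car -> car;
  meet : car -> car -> car;
  compl : car -> car;
  zero : car;
  one : car;
  g : car -> car;
  joinC : forall x y, join x y = join y x;
  meetC : forall x y, meet x y = meet y x;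
  joinA : forall x y z, join x (join y z) = join (join x y) z;
  meetA : forall x y z, meet x (meet y z) = meet (meet x y) z;
  join_meet_absorb : forall x y, join x (meet x y) = x;
  meet_join_absorb : forall x y, meet x (join x y) = x;
  meet_join_distr : forall x y z, meet x (join y z) = join (meet x y) (meet x z);
  join0 : forall x, join x zero = x;
  meet1 : forall x, meet x one = x;
  join_compl : forall x, join x (compl x) = one;
  meet_compl : forall x, meet x (compl x) = zero;
  g_one : g one = one;
  g_meet : forall x y, g (meet x y) = meet (g x) (g y);
  g_le : forall x, meet (g x) x = g x;
  g_idem : forall x, g (g x) = g x
}.

Arguments join {i} _ _.
Arguments meet {i} _ _.
Arguments compl {i} _.
Arguments g {i} _.

Definition is_hom {A C : IA} (f : A -> C) : Prop :=
  (forall x y, f (join x y) = join (f x) (f y)) /\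
  (forall x y, f (meet x y) = meet (f x) (f y)) /\
  (forall x, f (compl x) = compl (f x)) /\
  f (zero A) = zero C /\ f (one A) = one C /\
  (forall x, f (g x) = g (f x)).

Definition surjective {X Y : Type} (f : X -> Y) : Prop := forall y, exists x, f x = y.
Definition injective {X Y : Type} (f : X -> Y) : Prop := forall x y, f x = f y -> x = y.

(** [P] (with homomorphisms [p i]) is a direct product of the family [A]
    (up to isomorphism: the induced map into the product is bijective). *)
Definition is_product (I : Type) (A : I -> IA) (P : IA) (p : forall i, P -> A i) : Prop :=
  (forall i, is_hom (p i)) /\
  (forall x y : P, (forall i, p i x = p i y) -> x = y) /\
  (forall a : forall i, A i, exists x : P, forall i, p i x = a i).

Definition variety (V : IA -> Prop) : Prop :=
  (forall (A C : IA) (f : A -> C), V A -> is_hom f -> surjective f -> V C) /\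
  (forall (A C : IA) (e : C -> A), V A -> is_hom e -> injective e -> V C) /\
  (forall (I : Type) (A : I -> IA) (P : IA) (p : forall i, P -> A i),
      (forall i, V (A i)) -> is_product A P p -> V P).

Definition gen_variety (K : IA -> Prop) (A : IA) : Prop :=
  forall W, variety W -> (forall C, K C -> W C) -> W A.

Definition is_open {A : IA} (a : A) : Prop := g a = a.

Inductive gen_open {A : IA} : A -> Prop :=
  | go_open : forall a, is_open a -> gen_open a
  | go_zero : gen_open (@zero A)
  | go_one : gen_open (@one A)
  | go_join : forall a b, gen_open a -> gen_open b -> gen_open (join a b)
  | go_meet : forall a b, gen_open a -> gen_open b -> gen_open (meet a b)
  | go_compl : forall a, gen_open a -> gen_open (compl a).

Definition star_algebra (A : IA) : Prop := forall a : A, gen_open a.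

Definition star_variety (V : IA -> Prop) : IA -> Prop :=
  gen_variety (fun A => V A /\ star_algebra A).

(** [S] (via the embedding [e]) is B^*: e is an injective homomorphism of
    interior algebras whose image is exactly the Boolean subalgebra of B
    generated by the open elements of B. *)
Definition is_star_of (S B : IA) (e : S -> B) : Prop :=
  is_hom e /\ injective e /\ (forall b : B, gen_open b <-> exists s, e s = b).

Definition projective (K : IA -> Prop) (P : IA) : Prop :=
  K P /\
  forall (A C : IA) (f : A -> C) (h : P -> C),
    K A -> K C -> is_hom f -> surjective f -> is_hom h ->
    exists k : P -> A, is_hom k /\ forall x, f (k x) = h x.

From Stdlib Require Import ProofIrrelevance.

(* A homomorphism from a *-algebra P lands in the *-subalgebra C^* of its
   target, and a surjection A -> C restricts to a surjection A^* -> C^*.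
   Since A^* and C^* are *-algebras of V, they lie in V^*, so a lifting
   problem for P in V is transported to one in V^*; the solution, composed
   with the inclusion A^* -> A, solves the original problem. The converse
   holds because V^* is contained in V. *)

Lemma val_inj {X : Type} {P : X -> Prop} (u v : {x : X | P x}) :
  proj1_sig u = proj1_sig v -> u = v.
Proof. apply eq_sig_hprop; intros; apply proof_irrelevance. Qed.

Lemma is_hom_comp {A B C : IA} (f : A -> B) (h : B -> C) :
  is_hom f -> is_hom h -> is_hom (fun x => h (f x)).
Proof.
  intros (fj & fm & fc & f0 & f1 & fg) (hj & hm & hc & h0 & h1 & hg).
  repeat split; intros; congruence.
Qed.

Section Subalgebra.
Variables (A : IA) (P : A -> Prop).
Hypotheses (P0 : P (zero A)) (P1 : P (one A))
  (Pjoin : forall x y, P x -> P y -> P (join x y))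
  (Pmeet : forall x y, P x -> P y -> P (meet x y))
  (Pcompl : forall x, P x -> P (compl x))
  (Pg : forall x, P x -> P (g x)).

Definition subIA : IA.
Proof.
  refine (@MkIA {x : A | P x}
    (fun x y => exist _ (join (proj1_sig x) (proj1_sig y))
                  (Pjoin _ _ (proj2_sig x) (proj2_sig y)))
    (fun x y => exist _ (meet (proj1_sig x) (proj1_sig y))
                  (Pmeet _ _ (proj2_sig x) (proj2_sig y)))
    (fun x => exist _ (compl (proj1_sig x)) (Pcompl _ (proj2_sig x)))
    (exist _ (zero A) P0) (exist _ (one A) P1)
    (fun x => exist _ (g (proj1_sig x)) (Pg _ (proj2_sig x)))
    _ _ _ _ _ _ _ _ _ _ _ _ _ _ _);
  intros; apply val_inj; simpl.
  all: first [ apply joinC | apply meetC | apply joinA | apply meetA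
             | apply join_meet_absorb | apply meet_join_absorb
             | apply meet_join_distr | apply join0 | apply meet1
             | apply join_compl | apply meet_compl
             | apply g_one | apply g_meet | apply g_le | apply g_idem ].
Defined.

Lemma subIA_val_hom : is_hom (fun x : subIA => proj1_sig x).
Proof. repeat split. Qed.

Lemma subIA_val_inj : injective (fun x : subIA => proj1_sig x).
Proof. intros x y; apply val_inj. Qed.

Definition subIA_corestrict {X : IA} (h : X -> A) (Ph : forall x, P (h x)) :
  X -> subIA := fun x => exist _ (h x) (Ph x).

Lemma subIA_corestrict_hom {X : IA} (h : X -> A) (Ph : forall x, P (h x)) :
  is_hom h -> is_hom (subIA_corestrict h Ph).
Proof.
  intros (hj & hm & hc & h0 & h1 & hg).
  repeat split; intros; apply val_inj; simpl; auto.
Qed.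

End Subalgebra.

Section StarSubalgebra.
Variable A : IA.

Lemma g_gen_open (x : A) : gen_open (g x).
Proof. apply go_open, g_idem. Qed.

Definition star : IA :=
  @subIA A gen_open go_zero go_one (@go_join A) (@go_meet A) (@go_compl A)
    (fun x _ => g_gen_open x).

Definition star_val : star -> A := fun x => proj1_sig x.

Lemma star_val_hom : is_hom star_val.
Proof. apply subIA_val_hom. Qed.

Lemma star_val_inj : injective star_val.
Proof. apply subIA_val_inj. Qed.

Definition star_corestrict {X : IA} (h : X -> A) (Ph : forall x, gen_open (h x)) :
  X -> star := fun x => exist _ (h x) (Ph x).

Lemma star_corestrict_hom {X : IA} (h : X -> A) (Ph : forall x, gen_open (h x)) :
  is_hom h -> is_hom (star_corestrict h Ph).
Proof. apply subIA_corestrict_hom. Qed.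

End StarSubalgebra.

Arguments star_val {A} _.
Arguments star_corestrict {A X} h Ph _.
Arguments star_corestrict_hom {A X h} Ph _.

Lemma hom_gen_open {A C : IA} {f : A -> C} :
  is_hom f -> forall a, gen_open a -> gen_open (f a).
Proof.
  intros (fj & fm & fc & f0 & f1 & fg) a Ha.
  induction Ha as [a Ha| | |a b _ IHa _ IHb|a b _ IHa _ IHb|a _ IHa].
  - apply go_open; unfold is_open in *; rewrite <- fg; congruence.
  - rewrite f0; apply go_zero.
  - rewrite f1; apply go_one.
  - rewrite fj; apply go_join; assumption.
  - rewrite fm; apply go_meet; assumption.
  - rewrite fc; apply go_compl; assumption.
Qed.

Lemma surj_gen_open {A C : IA} {f : A -> C} : is_hom f -> surjective f ->
  forall {c}, gen_open c -> exists a, gen_open a /\ f a = c.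
Proof.
  intros (fj & fm & fc & f0 & f1 & fg) fs c Hc.
  induction Hc as [c Hc| | |c d _ [a [Ha Ea]] _ [b [Hb Eb]]
                 |c d _ [a [Ha Ea]] _ [b [Hb Eb]]|c _ [a [Ha Ea]]].
  - destruct (fs c) as [a Ea].
    exists (g a); split; [apply g_gen_open | rewrite fg, Ea; exact Hc].
  - exists (zero A); split; [apply go_zero | exact f0].
  - exists (one A); split; [apply go_one | exact f1].
  - exists (join a b); split; [apply go_join; assumption | rewrite fj; congruence].
  - exists (meet a b); split; [apply go_meet; assumption | rewrite fm; congruence].
  - exists (compl a); split; [apply go_compl; assumption | rewrite fc; congruence].
Qed.

(* Every intermediate element of a derivation of [gen_open (e s)] is itself
   generated, hence in the image of e, so the derivation pulls back to S. *)
Lemma gen_open_reflect {S B : IA} {e : S -> B} :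
  is_hom e -> injective e -> (forall b, gen_open b -> exists s, e s = b) ->
  forall s, gen_open (e s) -> gen_open s.
Proof.
  intros (ej & em & ec & e0 & e1 & eg) ei onto s Hs.
  remember (e s) as b eqn:Eb; revert s Eb.
  induction Hs as [b Hb| | |a b Ha IHa Hb IHb|a b Ha IHa Hb IHb|a Ha IHa];
    intros s Es.
  - apply go_open, ei; unfold is_open in Hb; rewrite eg; congruence.
  - replace s with (zero S) by (apply ei; congruence); apply go_zero.
  - replace s with (one S) by (apply ei; congruence); apply go_one.
  - destruct (onto a Ha) as [s1 E1], (onto b Hb) as [s2 E2].
    replace s with (join s1 s2) by (apply ei; rewrite ej; congruence).
    apply go_join; auto.
  - destruct (onto a Ha) as [s1 E1], (onto b Hb) as [s2 E2].
    replace s with (meet s1 s2) by (apply ei; rewrite em; congruence).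
    apply go_meet; auto.
  - destruct (onto a Ha) as [s1 E1].
    replace s with (compl s1) by (apply ei; rewrite ec; congruence).
    apply go_compl; auto.
Qed.

Lemma star_of_star_algebra {S B : IA} {e : S -> B} :
  is_star_of S B e -> star_algebra S.
Proof.
  intros (eh & ei & Hstar) s.
  apply (gen_open_reflect eh ei); [intros b; apply Hstar | apply Hstar; eauto].
Qed.

Lemma star_algebra_star (A : IA) : star_algebra (star A).
Proof.
  intros x.
  apply (gen_open_reflect (@star_val_hom A) (@star_val_inj A)).
  - intros a Ha; exists (exist _ a Ha); reflexivity.
  - exact (proj2_sig x).
Qed.

Section StarMap.
Variables (A C : IA) (f : A -> C).
Hypothesis fhom : is_hom f.

Definition star_map : star A -> star C :=
  star_corestrict (fun x => f (star_val x))
    (fun x => hom_gen_open fhom _ (proj2_sig x)).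

Lemma star_map_hom : is_hom star_map.
Proof. apply star_corestrict_hom, is_hom_comp; [apply star_val_hom | exact fhom]. Qed.

Lemma star_map_surj : surjective f -> surjective star_map.
Proof.
  intros fs [c Hc].
  destruct (surj_gen_open fhom fs Hc) as [a [Ha Ea]].
  exists (exist _ a Ha); apply val_inj; exact Ea.
Qed.

End StarMap.

Arguments star_map {A C f} fhom _.
Arguments star_map_hom {A C f} fhom.
Arguments star_map_surj {A C f} fhom _.

Section StarVariety.
Variable V : IA -> Prop.
Hypothesis HV : variety V.

Lemma star_variety_sub (A : IA) : star_variety V A -> V A.
Proof. intros HA; apply HA; [exact HV | tauto]. Qed.

Lemma star_variety_of_star_algebra (A : IA) :
  V A -> star_algebra A -> star_variety V A.
Proof. intros HA HsA W _ HW; apply HW; auto. Qed.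

Lemma star_variety_star {A : IA} : V A -> star_variety V (star A).
Proof.
  intros HA; apply star_variety_of_star_algebra; [|apply star_algebra_star].
  destruct HV as [_ [HVsub _]].
  exact (HVsub _ _ _ HA (@star_val_hom A) (@star_val_inj A)).
Qed.

Lemma projective_star_variety (P : IA) : star_algebra P ->
  projective (star_variety V) P -> projective V P.
Proof.
  intros HsP [HP lift]; split; [apply star_variety_sub, HP |].
  intros A C f h HA HC fhom fsurj hhom.
  pose (hs := star_corestrict h (fun x => hom_gen_open hhom _ (HsP x))).
  destruct (lift _ _ (star_map fhom) hs (star_variety_star HA)
              (star_variety_star HC) (star_map_hom fhom)
              (star_map_surj fhom fsurj) (star_corestrict_hom _ hhom))
    as [k [khom Ek]].
  exists (fun x => star_val (k x)); split.
  - apply is_hom_comp; [exact khom | apply star_val_hom].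
  - intros x; exact (f_equal (@star_val C) (Ek x)).
Qed.

Lemma projective_of_star_variety (P : IA) : star_algebra P ->
  projective V P -> projective (star_variety V) P.
Proof.
  intros HsP [HP lift]; split; [apply star_variety_of_star_algebra; assumption |].
  intros A C f h HA HC; apply lift; apply star_variety_sub; assumption.
Qed.

End StarVariety.

Theorem lemma4p16 (V : IA -> Prop) (HV : variety V) (B : IA) (HB : V B)
    (S : IA) (e : S -> B) (HS : is_star_of S B e) :
  projective (star_variety V) S <-> projective V S.
Proof.
  pose proof (star_of_star_algebra HS) as HsS.
  split; [apply projective_star_variety | apply projective_of_star_variety];
    assumption.
Qed.
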